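(* Let $\mathcal{C}_1$ be an even-like $[n,k_1,d_1]_2$ binary linear code, let $\mathcal{C}_2$ be the $[n,1,n]_2$ repetition code generated by the all-ones vector, and let $\mathcal{C}=\{(\mathbf{u},\mathbf{u}+\mathbf{v}):\mathbf{u}\in\mathcal{C}_1,\mathbf{v}\in\mathcal{C}_2\}$. Then: 1) $\mathcal{C}$ is a binary almost Euclidean self-orthogonal code if and only if $n$ is odd; 2) $\mathcal{C}$ is a binary Euclidean self-orthogonal code if and only if $n$ is even.
   Context: A binary code is even-like if every codeword has even Hamming weight. For a binary $[N,k,d]_2$ code $\mathcal{C}$, $\mathrm{Hull}_E(\mathcal{C})=\mathcal{C}\cap\mathcal{C}^{\perp_E}$ with $\perp_E$ the dual under $\sum_ix_iy_i$; $\mathcal{C}$ is Euclidean self-orthogonal if $\dim(\mathrm{Hull}_E(\mathcal{C}))=k$ and almost Euclidean self-orthogonal if $\dim(\mathrm{Hull}_E(\mathcal{C}))=k-1$. *)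

From HB Require Import structures.
From mathcomp Require Import all_boot all_order all_algebra.
Set Implicit Arguments. Unset Strict Implicit. Unset Printing Implicit Defensive.
Import GRing.Theory.
Local Open Scope ring_scope.

Definition dotE (F : fieldType) (n : nat) (x y : 'rV[F]_n) : F :=
  \sum_(i < n) x 0 i * y 0 i.

Definition wt (F : fieldType) (n : nat) (x : 'rV[F]_n) : nat :=
  #|[set i : 'I_n | x 0 i != 0]|.

Definition even_like (F : fieldType) (n : nat) (C : {vspace 'rV[F]_n}) : Prop :=
  forall x, x \in C -> ~~ odd (wt x).

(* Euclidean dual: the subspace spanned by (= equal to) the set of all
   vectors orthogonal to every codeword (the ambient space is finite). *)
Definition dualE (F : finFieldType) (n : nat) (C : {vspace 'rV[F]_n})
  : {vspace 'rV[F]_n} :=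
  <<[seq y <- enum [set: 'rV[F]_n] |
       [forall x : 'rV[F]_n, (x \in C) ==> (dotE x y == 0%R)]]>>%VS.

Definition hullE (F : finFieldType) (n : nat) (C : {vspace 'rV[F]_n})
  : {vspace 'rV[F]_n} := (C :&: dualE C)%VS.

Definition self_orthE (F : finFieldType) (n : nat) (C : {vspace 'rV[F]_n}) : Prop :=
  \dim (hullE C) = \dim C.

Definition almost_self_orthE (F : finFieldType) (n : nat) (C : {vspace 'rV[F]_n}) : Prop :=
  (\dim (hullE C)).+1 = \dim C.

Definition ones (F : fieldType) (n : nat) : 'rV[F]_n := const_mx 1.
Definition rep_code (F : fieldType) (n : nat) : {vspace 'rV[F]_n} := <[ones F n]>%VS.

(** A codeword of C has the form (u, u + b 1) with u in C1 and b in F_2. For two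
    such codewords the two copies of u.u' cancel in characteristic 2 and u.1 = 0
    because u has even weight, so their inner product is b b' n. If n is even, C
    is therefore self-orthogonal. If n is odd, the codewords with b = 0 lie in
    the hull, and w = (0, 1), with w.w = 1, spans a complement of the hull in C,
    so the hull has codimension one. *)
From mathcomp Require Import all_boot all_order all_algebra.
Set Implicit Arguments. Unset Strict Implicit. Unset Printing Implicit Defensive.
Import GRing.Theory.
Local Open Scope ring_scope.

Section DotE.
Variables (F : fieldType) (n : nat).
Implicit Types x y z : 'rV[F]_n.

Lemma dotEC x y : dotE x y = dotE y x.
Proof. by apply: eq_bigr => i _; rewrite mulrC. Qed.

Lemma dotEDr x y z : dotE x (y + z) = dotE x y + dotE x z.
Proof. by rewrite /dotE -big_split; apply: eq_bigr => i _; rewrite !mxE mulrDr. Qed.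

Lemma dotEDl x y z : dotE (x + y) z = dotE x z + dotE y z.
Proof. by rewrite dotEC dotEDr !(dotEC z). Qed.

Lemma dotEZr a x y : dotE x (a *: y) = a * dotE x y.
Proof. by rewrite /dotE mulr_sumr; apply: eq_bigr => i _; rewrite !mxE mulrCA. Qed.

Lemma dotEZl a x y : dotE (a *: x) y = a * dotE x y.
Proof. by rewrite dotEC dotEZr dotEC. Qed.

Lemma dotE0r x : dotE x 0 = 0.
Proof. by rewrite -(scale0r 0) dotEZr mul0r. Qed.

Lemma dotE_ones_ones : dotE (ones F n) (ones F n) = n%:R.
Proof.
rewrite /dotE; under eq_bigr => i _ do rewrite !mxE mulr1.
by rewrite sumr_const card_ord.
Qed.

End DotE.

Lemma dotE_row_mx (F : fieldType) (n1 n2 : nat) (x1 y1 : 'rV[F]_n1) (x2 y2 : 'rV[F]_n2) :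
  dotE (row_mx x1 x2) (row_mx y1 y2) = dotE x1 y1 + dotE x2 y2.
Proof.
by rewrite /dotE big_split_ord /=; congr (_ + _); apply: eq_bigr => i _;
  rewrite ?row_mxEl ?row_mxEr.
Qed.

Lemma dimv_add_line (K : fieldType) (vT : vectType K) (U : {vspace vT}) (w : vT) :
  w \notin U -> \dim (U + <[w]>) = (\dim U).+1.
Proof.
move=> wNU; have wn0 : w != 0 by apply: contraNneq wNU => ->; apply: mem0v.
rewrite dimv_disjoint_sum ?dim_vline ?wn0 ?addn1 //.
apply/eqP; rewrite -subv0; apply/subvP => x /memv_capP[xU /vlineP[k xk]].
have [k0 | kn0] := eqVneq k 0; first by rewrite xk k0 scale0r mem0v.
by case/negP: wNU; rewrite -(scalerK kn0 w) -xk memvZ.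
Qed.

Section Hull.
Variables (F : finFieldType) (n : nat).
Implicit Type C : {vspace 'rV[F]_n}.

Lemma mem_dualE C y : reflect (forall x, x \in C -> dotE x y = 0) (y \in dualE C).
Proof.
apply: (iffP idP) => [yD x xC | orth_y].
  move: yD; rewrite /dualE; set s := [seq _ <- _ | _].
  move=> /(coord_span (X := in_tuple s)) ->.
  apply: (big_ind (fun z => dotE x z = 0)) => [||i _]; first exact: dotE0r.
    by move=> a b xa xb; rewrite dotEDr xa xb addr0.
  have : (in_tuple s)`_i \in s by apply: mem_nth.
  rewrite mem_filter dotEZr => /andP[/forallP/(_ x)/implyP/(_ xC)/eqP -> _].
  by rewrite mulr0.
apply: memv_span; rewrite mem_filter mem_enum in_setT andbT.
by apply/forallP => x; apply/implyP => xC; apply/eqP; apply: orth_y.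
Qed.

Lemma self_orthE_sub_dual C : (C <= dualE C)%VS -> self_orthE C.
Proof. by move=> /capv_idPl; rewrite /self_orthE /hullE => ->. Qed.

Lemma almost_self_orthE_line C w :
  w \in C -> dotE w w != 0 -> (C <= hullE C + <[w]>)%VS -> almost_self_orthE C.
Proof.
move=> wC ww_n0 sub_C; rewrite /almost_self_orthE.
have wNhull : w \notin hullE C.
  by apply: contra ww_n0 => /memv_capP[_ /mem_dualE/(_ w wC) ->].
have eqC : C = (hullE C + <[w]>)%VS.
  by apply/eqP; rewrite eqEsubv sub_C subv_add capvSl -memvE wC.
by rewrite [in RHS]eqC dimv_add_line.
Qed.

Lemma almost_self_orthENself C : almost_self_orthE C -> ~ self_orthE C.
Proof. by rewrite /almost_self_orthE /self_orthE => <-; apply: n_Sn. Qed.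

End Hull.

Lemma F2_natr (k : nat) : (k%:R : 'F_2) = (odd k)%:R.
Proof. by rewrite -Fp_nat_mod // modn2. Qed.

Lemma F2_addrr (a : 'F_2) : a + a = 0.
Proof. by rewrite addrr_pchar2 ?pchar_Fp. Qed.

Lemma dotE_ones_wt (n : nat) (u : 'rV['F_2]_n) : dotE u (ones 'F_2 n) = (odd (wt u))%:R.
Proof.
have bitE (a : 'F_2) : a = (a != 0)%:R by case: a => [[|[|k]] ?]; apply/val_inj.
rewrite -F2_natr /dotE /wt -sum1_card natr_sum [RHS]big_mkcond /=.
by apply: eq_bigr => i _; rewrite !mxE mulr1 inE {1}[u 0 i]bitE; case: (_ != _).
Qed.

Lemma dotE_uuv (n : nat) (u u' : 'rV['F_2]_n) (a b : 'F_2) :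
  ~~ odd (wt u) -> ~~ odd (wt u') ->
  dotE (row_mx u (u + a *: ones _ n)) (row_mx u' (u' + b *: ones _ n)) = a * b * n%:R.
Proof.
move=> ev_u ev_u'; have u1 : dotE u (ones _ n) = 0 by rewrite dotE_ones_wt (negPf ev_u).
have u'1 : dotE (ones _ n) u' = 0 by rewrite dotEC dotE_ones_wt (negPf ev_u').
rewrite dotE_row_mx !(dotEDl, dotEDr, dotEZl, dotEZr) u1 u'1 dotE_ones_ones.
by rewrite !mulr0 !addr0 !add0r addrA F2_addrr add0r mulrA.
Qed.

Section UUVConstruction.
Variables (n : nat) (C1 : {vspace 'rV['F_2]_n}) (C : {vspace 'rV['F_2]_(n + n)}).
Hypothesis C1_even : even_like C1.
Hypothesis memC : forall x, x \in C <->
  exists u v, u \in C1 /\ v \in rep_code 'F_2 n /\ x = row_mx u (u + v).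

Local Notation uuv u b := (row_mx u (u + b *: ones 'F_2 n)).

Lemma uuv_in_C u b : u \in C1 -> uuv u b \in C.
Proof. by move=> uC1; apply/memC; exists u, (b *: ones _ n); rewrite memvZ ?memv_line. Qed.

Lemma memC_uuv x : x \in C -> exists u b, u \in C1 /\ x = uuv u b.
Proof. by case/memC => u [_ [uC1 [/vlineP[b ->] ->]]]; exists u, b. Qed.

Lemma dotE_uuv_C u u' a b :
  u \in C1 -> u' \in C1 -> dotE (uuv u a) (uuv u' b) = a * b * n%:R.
Proof. by move=> uC1 u'C1; rewrite dotE_uuv ?C1_even. Qed.

Lemma self_orthE_uuv : ~~ odd n -> self_orthE C.
Proof.
move=> ev_n; apply/self_orthE_sub_dual/subvP => _ /memC_uuv[u [a [uC1 ->]]].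
apply/mem_dualE => _ /memC_uuv[u' [b [u'C1 ->]]].
by rewrite dotE_uuv_C // F2_natr (negPf ev_n) mulr0.
Qed.

Lemma almost_self_orthE_uuv : odd n -> almost_self_orthE C.
Proof.
move=> odd_n; pose w : 'rV_(n + n) := uuv 0 1.
have C1_0 : 0 \in C1 := mem0v C1.
apply: (almost_self_orthE_line (w := w)); first exact: uuv_in_C.
  by rewrite dotE_uuv_C // F2_natr odd_n !mul1r oner_neq0.
apply/subvP => _ /memC_uuv[u [b [uC1 ->]]].
have -> : uuv u b = uuv u 0 + b *: w.
  by rewrite scale_row_mx add_row_mx scaler0 scale0r scale1r !addr0 add0r.
apply: memv_add; last by rewrite memvZ ?memv_line.
rewrite memv_cap uuv_in_C //=.
by apply/mem_dualE => _ /memC_uuv[u' [b' [u'C1 ->]]]; rewrite dotE_uuv_C // mulr0 mul0r.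
Qed.

End UUVConstruction.

Theorem lemma8 (n : nat) (C1 : {vspace 'rV['F_2]_n})
  (C : {vspace 'rV['F_2]_(n + n)}) :
  (0 < n)%N ->
  even_like C1 ->
  (forall x : 'rV['F_2]_(n + n),
      x \in C <-> exists u v, u \in C1 /\ v \in rep_code 'F_2 n /\
                             x = row_mx u (u + v)) ->
  (almost_self_orthE C <-> odd n) /\ (self_orthE C <-> ~~ odd n).
Proof.
move=> _ C1_even memC.
have [odd_n | ev_n] := boolP (odd n).
- have almost := almost_self_orthE_uuv C1_even memC odd_n.
  by split; split=> // self; case: (almost_self_orthENself almost).
- have self := self_orthE_uuv C1_even memC ev_n.
  by split; split=> // almost; case: (almost_self_orthENself almost).
Qed.
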